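(* Let $\Gamma:\Delta\to\mathbb{R}_+$ be a completely monotone double kernel (see context) whose measure $\mu$ satisfies $0<\mu(\mathbb{R})<+\infty$, extended to the diagonal by $\Gamma(t,t)=\mu(\mathbb{R})$. Then $\Gamma$ preserves nonnegativity.
   Context: $\Delta=\{(t,s)\in\mathbb{R}_+^2:s\le t\}$, $\mathring\Delta=\{(t,s):0<s<t\}$. A function $\Gamma:\mathring\Delta\to\mathbb{R}_+$ is a completely monotone double kernel if there exist a Borel measure $\mu$ on $\mathbb{R}$ finite on compact sets and a family $(\rho(\alpha,\cdot))_{\alpha\in\mathbb{R}}$ of Borel measures on $\mathbb{R}_+$, finite on compact sets, such that $\rho(\beta,\cdot)-\rho(\alpha,\cdot)$ is a nonnegative measure whenever $\alpha\le\beta$, with either $\Gamma(t,s)=\int_{\mathbb{R}}e^{-\rho(\alpha,(s,t])}\mu(\mathrm{d}\alpha)$ for all $(t,s)\in\mathring\Delta$, or $\Gamma(t,s)=\int_{\mathbb{R}}e^{-\rho(\alpha,[s,t))}\mu(\mathrm{d}\alpha)$ for all $(t,s)\in\mathring\Delta$, and $\Gamma(t,s)<\infty$ for $t>s$. A kernel $\Gamma:\Delta\to\mathbb{R}_+$ preserves nonnegativity if for every $T>0$, every $K\in\mathbb{N}^*$, $x_1,\dots,x_K\in\mathbb{R}$ and $0\le t_1<\dots<t_K<T$ with $\sum_{k'=1}^kx_{k'}\Gamma(t_k,t_{k'})\ge0$ for all $k\in\{1,\dots,K\}$, one has $\sum_{k:t_k\le t}x_k\Gamma(t,t_k)\ge0$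 for all $t\in[0,T]$. *)

From HB Require Import structures.
From mathcomp Require Import all_boot all_order all_algebra.
From mathcomp Require Import all_classical all_reals all_analysis.
Set Implicit Arguments. Unset Strict Implicit. Unset Printing Implicit Defensive.
Import Order.TTheory GRing.Theory Num.Theory.
Import numFieldNormedType.Exports.
Local Open Scope classical_set_scope.
Local Open Scope ring_scope.

Definition finite_on_compacts (R : realType) (m : {measure set R -> \bar R}) : Prop :=
  forall K : set R, compact K -> (m K < +oo)%E.

Definition supported_on_Rplus (R : realType) (m : {measure set R -> \bar R}) : Prop :=
  m [set x : R | x < 0] = 0%E.

(** [nu - m] is a nonnegative measure, i.e. [nu = m + d] for a measure [d]. *)
Definition measure_le_diff (R : realType) (m nu : {measure set R -> \bar R}) : Prop :=
  exists d : {measure set R -> \bar R},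
    forall A : set R, measurable A -> nu A = (m A + d A)%E.

Definition preserves_nonnegativity (R : realType) (G : R -> R -> R) : Prop :=
  forall (T : R), 0 < T ->
  forall (K : nat), (0 < K)%N ->
  forall (x tt : 'I_K -> R),
    (forall k, 0 <= tt k) ->
    (forall k k' : 'I_K, (k < k')%N -> tt k < tt k') ->
    (forall k, tt k < T) ->
    (forall k : 'I_K, 0 <= \sum_(k' < K | (k' <= k)%N) x k' * G (tt k) (tt k')) ->
    forall t, 0 <= t -> t <= T ->
      0 <= \sum_(k < K | tt k <= t) x k * G t (tt k).

(** Completely monotone double kernel formula, extended to s = 0, in its two variants (left-open or right-open intervals). *)
Definition cm_double_kernel_formula (R : realType) (G : R -> R -> R)
  (mu : {measure set R -> \bar R}) (rho : R -> {measure set R -> \bar R}) : Prop :=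
  (forall s t : R, 0 <= s -> s < t ->
     ((G t s)%:E = \int[mu]_(a in setT) expeR (- rho a `]s, t]%classic))%E)
  \/
  (forall s t : R, 0 <= s -> s < t ->
     ((G t s)%:E = \int[mu]_(a in setT) expeR (- rho a `[s, t[%classic))%E).

(* For a positive kernel g, let S_n(t) = sum_(k < n) x_k g(t, t_k).  If the
   ratios g(t, u) / g(s, u) (u <= s <= t) are nonincreasing in u, the invariant
   S_n(s) g(t, u) <= S_n(t) g(s, u) for u >= t_(n-1) survives the addition of
   each new time t_n, and together with S_n(t_(n-1)) >= 0 it gives S_n >= 0 on
   [t_(n-1), +oo).  For a completely monotone double kernel,
   g(t, s) = int exp(-rho(a, (s, t])) mu(da), additivity of rho(a, .) over
   adjacent intervals factors the integrands, and the ratio inequality becomes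
   Chebyshev's integral inequality for the two nonincreasing functions
   a |-> exp(-rho(a, (p, u])) and a |-> exp(-rho(a, (s, t])) against the weight
   exp(-rho(a, (u, s])). *)

From HB Require Import structures.
From mathcomp Require Import all_boot all_order all_algebra.
From mathcomp Require Import all_classical all_reals all_analysis.
From mathcomp Require Import ring lra measurable_realfun.
Set Implicit Arguments. Unset Strict Implicit. Unset Printing Implicit Defensive.
Import Order.TTheory GRing.Theory Num.Theory.
Import numFieldNormedType.Exports.
Local Open Scope classical_set_scope.
Local Open Scope ring_scope.

Definition positive_kernel (R : realType) (g : R -> R -> R) : Prop :=
  forall s t, 0 <= s -> s <= t -> 0 < g t s.

Definition ratio_nonincreasing_kernel (R : realType) (g : R -> R -> R) : Prop :=
  forall p u s t, 0 <= p -> p <= u -> u <= s -> s <= t ->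
    g t u * g s p <= g t p * g s u.

Section PartialSums.
Variables (R : realType) (g : R -> R -> R) (K : nat) (x tau : 'I_K -> R).
Hypothesis g_gt0 : positive_kernel g.
Hypothesis g_ratio : ratio_nonincreasing_kernel g.

Definition partial_sum (n : nat) (s : R) : R :=
  \sum_(k < K | (k < n)%N) x k * g s (tau k).

Definition ratio_dominated (n : nat) (u : R) : Prop :=
  forall s t, u <= s -> s <= t ->
    partial_sum n s * g t u <= partial_sum n t * g s u.

Lemma partial_sumS (k : 'I_K) s :
  partial_sum k.+1 s = partial_sum k s + x k * g s (tau k).
Proof.
rewrite /partial_sum (bigD1 k) //= addrC; congr (_ + _).
by apply: eq_bigl => i; rewrite ltnS ltn_neqAle andbC.
Qed.

Lemma ratio_dominated0 u : ratio_dominated 0 u.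
Proof. by move=> s t _ _; rewrite /partial_sum !big_pred0 ?mul0r. Qed.

Lemma ratio_dominatedS (k : 'I_K) :
  ratio_dominated k (tau k) -> ratio_dominated k.+1 (tau k).
Proof. by move=> D s t qs st; rewrite !partial_sumS; have := D s t qs st; lra. Qed.

Lemma ratio_dominated_ge0 n u s : 0 <= u -> ratio_dominated n u ->
  0 <= partial_sum n u -> u <= s -> 0 <= partial_sum n s.
Proof.
move=> u0 D Su0 us; rewrite -(pmulr_lge0 _ (g_gt0 u0 (lexx u))).
apply: le_trans (D u s (lexx u) us).
by rewrite mulr_ge0 // ltW // g_gt0.
Qed.

Lemma ratio_dominated_le n q u : 0 <= q -> ratio_dominated n q ->
  (forall s, q <= s -> 0 <= partial_sum n s) -> q <= u -> ratio_dominated n u.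
Proof.
move=> q0 D S0 qu s t us st; have qs := le_trans qu us.
rewrite -(@ler_pM2l _ (g s q)) ?g_gt0 //.
have Sg := ler_wpM2l (S0 s qs) (g_ratio q0 qu us st).
have gD := ler_wpM2r (ltW (g_gt0 (le_trans q0 qu) us)) (D s t qs st).
have -> : g s q * (partial_sum n s * g t u) = partial_sum n s * (g t u * g s q).
  by ring.
have -> : g s q * (partial_sum n t * g s u) = partial_sum n t * g s q * g s u.
  by ring.
by apply: le_trans Sg _; rewrite mulrA.
Qed.

Hypothesis tau_ge0 : forall k, 0 <= tau k.
Hypothesis tau_incr : forall k k' : 'I_K, (k < k')%N -> tau k < tau k'.
Hypothesis partial_sum_ge0 : forall k : 'I_K, 0 <= partial_sum k.+1 (tau k).

Lemma tau_le (k k' : 'I_K) : (k <= k')%N -> tau k <= tau k'.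
Proof.
by rewrite leq_eqVlt => /orP[/eqP/val_inj -> //|/tau_incr/ltW].
Qed.

Lemma partial_sum_dominated n : (n <= K)%N -> forall u, 0 <= u ->
  (forall k : 'I_K, (k < n)%N -> tau k <= u) -> ratio_dominated n u.
Proof.
elim: n => [_ u _ _|n IH hn u u0 hu]; first exact: ratio_dominated0.
pose k := Ordinal hn.
have Dk : ratio_dominated k (tau k).
  by apply: IH (ltnW hn) _ (tau_ge0 k) _ => i ik; exact/ltW/tau_incr.
have Dk1 := ratio_dominatedS Dk.
apply: (ratio_dominated_le (tau_ge0 k) Dk1) (hu k (ltnSn n)) => s.
exact: ratio_dominated_ge0 (tau_ge0 k) Dk1 (partial_sum_ge0 k).
Qed.

End PartialSums.

Lemma ratio_nonincreasing_preserves_nonnegativity (R : realType) (g : R -> R -> R) :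
  positive_kernel g -> ratio_nonincreasing_kernel g -> preserves_nonnegativity g.
Proof.
move=> g_gt0 g_ratio _ _ K _ x tau tau_ge0 tau_incr _ sums_ge0 t _ _.
have [k1 k1t|no_time_le_t] := pickP (fun k => tau k <= t); last by rewrite big_pred0.
have [k0 k0t k0max] := @arg_maxnP _ k1 (fun k => tau k <= t) val k1t.
have -> : \sum_(k < K | tau k <= t) x k * g t (tau k) = partial_sum g x tau k0.+1 t.
  apply: eq_bigl => k; rewrite ltnS; apply/idP/idP => [/k0max //|].
  by move=> /(tau_le tau_incr) kk0; exact: le_trans kk0 k0t.
have S0 : 0 <= partial_sum g x tau k0.+1 (tau k0) by exact: sums_ge0.
apply: (ratio_dominated_ge0 g_gt0 (tau_ge0 k0) _ S0 k0t).
apply: partial_sum_dominated => // k; rewrite ltnS.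
exact: tau_le.
Qed.

Lemma Rintegral_gt0 (R : realType) d (T : measurableType d)
    (mu : {measure set T -> \bar R}) (f : T -> R) :
  (0 < mu setT)%E -> mu.-integrable setT (EFin \o f) -> (forall x, 0 < f x) ->
  0 < \int[mu]_x f x.
Proof.
move=> mu_gt0 intf f_gt0.
rewrite lt_neqAle Rintegral_ge0 ?andbT; last by move=> x _; exact: ltW.
apply/negP => /eqP/esym int0.
have absint0 : (\int[mu]_x `|(f x)%:E| = 0)%E.
  rewrite (eq_integral (fun x => (f x)%:E)); last first.
    by move=> x _; rewrite gee0_abs // lee_fin ltW.
  by rewrite -[LHS](fineK (integrable_fin_num measurableT intf)) -/(Rintegral _ _ _) int0.
have mf : measurable_fun setT (EFin \o f) := measurable_int mu intf.
have [N [mN N0 fN]] := (ae_eq_integral_abs mu measurableT mf).1 absint0.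
suff TN : setT `<=` N by move: mu_gt0; rewrite (subset_measure0 _ _ TN N0) ?ltxx.
by move=> x _; apply: fN => /(_ I) [/eqP]; rewrite gt_eqF.
Qed.

Section Chebyshev.
Variables (R : realType) (mu : {measure set R -> \bar R}).
Hypothesis mu_fin : (mu setT < +oo)%E.

Definition valued_in01 (f : R -> R) : Prop := forall x, 0 <= f x <= 1.

Lemma valued_in01M f g : valued_in01 f -> valued_in01 g ->
  valued_in01 (fun x => f x * g x).
Proof.
move=> f01 g01 x; have /andP[f0 f1] := f01 x; have /andP[g0 g1] := g01 x.
by rewrite mulr_ge0 //= mulr_ile1.
Qed.

Lemma valued_in01_integrable f : measurable_fun setT f -> valued_in01 f ->
  mu.-integrable setT (EFin \o f).
Proof.
move=> mf f01; apply: measurable_bounded_integrable => //.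
exists 1; split => // M M1 x _; apply: le_trans (ltW M1).
by have /andP[f0 f1] := f01 x; rewrite ger0_norm.
Qed.

Lemma integrableZl_EFin (a : R) f : mu.-integrable setT (EFin \o f) ->
  mu.-integrable setT (EFin \o (fun x => a * f x)).
Proof. exact: integrableZl. Qed.

Lemma integrable_lincomb (a b : R) f g :
  mu.-integrable setT (EFin \o f) -> mu.-integrable setT (EFin \o g) ->
  mu.-integrable setT (EFin \o (fun x => a * f x - b * g x)).
Proof.
move=> /(integrableZl_EFin a) intf /(integrableZl_EFin b) intg.
rewrite (_ : EFin \o _ =
  (EFin \o (fun x => (a * f x)%R)) \- (EFin \o (fun x => (b * g x)%R)))%E.
  exact: integrableB.
by apply/funext => x; rewrite /= EFinB.
Qed.

Lemma Rintegral_lincomb (a b : R) f g :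
  mu.-integrable setT (EFin \o f) -> mu.-integrable setT (EFin \o g) ->
  \int[mu]_x (a * f x - b * g x) = a * \int[mu]_x f x - b * \int[mu]_x g x.
Proof.
move=> intf intg.
by rewrite RintegralB ?RintegralZl //; exact: integrableZl_EFin.
Qed.

Lemma nonincreasing_threshold (A C : R -> R) (m : R) :
  nonincreasing_fun A -> nonincreasing_fun C -> valued_in01 C ->
  exists c, forall x, 0 <= (A x - m) * (C x - c).
Proof.
move=> A_ni C_ni C01.
(* U is an up-set, so C takes smaller values on U than off U *)
pose U := [set x | A x < m].
exists (sup (C @` U)) => x.
have [Ux|] := ltP (A x) m.
  have : C x <= sup (C @` U).
    apply: ub_le_sup; last by exists x.
    by exists 1 => _ [y _ <-]; have /andP[] := C01 y.
  by move=> Cx; apply: mulr_le0; lra.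
have [[y Uy]|U0] := pselect (exists y, U y); last first.
  rewrite (_ : C @` U = set0) ?sup0; last first.
    by apply/seteqP; split => // z [y Uy _]; apply: U0; exists y.
  by have /andP[C0 _] := C01 x => mx; apply: mulr_ge0; lra.
move=> mx; apply: mulr_ge0; first lra.
rewrite subr_ge0; apply: ge_sup; first by exists (C y), y.
move=> _ [z Uz <-]; apply: C_ni.
by rewrite leNgt; apply/negP => /ltW /A_ni; rewrite /U /= in Uz; lra.
Qed.

Lemma Rintegral_chebyshev (A B C : R -> R) :
  measurable_fun setT A -> measurable_fun setT B -> measurable_fun setT C ->
  valued_in01 A -> valued_in01 B -> valued_in01 C ->
  nonincreasing_fun A -> nonincreasing_fun C ->
  \int[mu]_x (B x * C x) * \int[mu]_x (A x * B x) <=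
  \int[mu]_x (A x * B x * C x) * \int[mu]_x B x.
Proof.
move=> mA mB mC A01 B01 C01 A_ni C_ni.
set IB := \int[mu]_x B x; set IAB := \int[mu]_x (A x * B x).
have IB0 : 0 <= IB by apply: Rintegral_ge0 => x _; have /andP[] := B01 x.
have A'_ni : nonincreasing_fun (fun x => IB * A x).
  by move=> x y /A_ni; exact: ler_wpM2l.
have [c key] := nonincreasing_threshold IAB A'_ni C_ni C01.
have iB := valued_in01_integrable mB B01.
have iAB := valued_in01_integrable (measurable_funM mA mB) (valued_in01M A01 B01).
have iBC := valued_in01_integrable (measurable_funM mB mC) (valued_in01M B01 C01).
have iABC := valued_in01_integrable (measurable_funM (measurable_funM mA mB) mC)
  (valued_in01M (valued_in01M A01 B01) C01).
have : 0 <= \int[mu]_x ((IB * (A x * B x * C x) - IAB * (B x * C x))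
                       - c * (IB * (A x * B x) - IAB * B x)).
  apply: Rintegral_ge0 => x _; have /andP[Bx0 _] := B01 x.
  have := mulr_ge0 (key x) Bx0; congr (0 <= _); ring.
rewrite RintegralB ?RintegralZl ?integrableZl_EFin ?integrable_lincomb //.
rewrite !Rintegral_lincomb // -/IB -/IAB.
set IABC := \int[mu]__ _; set IBC := \int[mu]__ _.
(* the weight (IB A - IAB) B has integral 0, so the threshold c drops out *)
have -> : IB * IABC - IAB * IBC - c * (IB * IAB - IAB * IB) =
  IABC * IB - IBC * IAB by ring.
by rewrite subr_ge0.
Qed.

End Chebyshev.

Lemma itv_bndbnd_setI0 d (T : orderType d) (a x y : itv_bound T) :
  [set` Interval a x] `&` [set` Interval x y] = set0.
Proof.
rewrite -set_itvI set_itv_ge //= -leNgt.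
by rewrite leIxl // leUr.
Qed.

Section CompletelyMonotoneKernel.
Variables (R : realType) (mu : {measure set R -> \bar R})
  (rho : R -> {measure set R -> \bar R}) (G : R -> R -> R) (b : bool).
Hypothesis rho_fin : forall a, finite_on_compacts (rho a).
Hypothesis rho_mono : forall a a' : R, a <= a' -> measure_le_diff (rho a) (rho a').
Hypothesis mu_gt0 : (0 < mu setT)%E.
Hypothesis mu_fin : (mu setT < +oo)%E.

(* b = false gives the intervals ]s, t], b = true the intervals [s, t[ *)
Let J (s t : R) := [set` Interval (BSide b s) (BSide b t)].

Hypothesis G_offdiag : forall s t, 0 <= s -> s < t ->
  ((G t s)%:E = \int[mu]_(a in setT) expeR (- rho a (J s t)))%E.
Hypothesis G_diag : forall t, 0 <= t -> G t t = fine (mu setT).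

Let r a s t := fine (rho a (J s t)).

Let rhoE a s t : rho a (J s t) = (r a s t)%:E.
Proof.
rewrite /r fineK // ge0_fin_numE ?measure_ge0 //.
apply: le_lt_trans (rho_fin a (@segment_compact R s t)).
apply: le_measure; rewrite ?inE; try exact: measurable_itv.
by apply: subset_itv; rewrite bnd_simp.
Qed.

Let r_ge0 a s t : 0 <= r a s t.
Proof. by rewrite -lee_fin -rhoE measure_ge0. Qed.

Let r_mono s t : nondecreasing_fun (fun a => r a s t).
Proof.
move=> a a' aa'; have [d rho_d] := rho_mono aa'.
by rewrite -lee_fin -!rhoE rho_d ?leeDl ?measure_ge0 //; exact: measurable_itv.
Qed.

Let r_add a p u t : p <= u -> u <= t -> r a p t = r a p u + r a u t.
Proof.
move=> pu ut; apply: EFin_inj; rewrite EFinD -!rhoE /J.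
rewrite (@itv_bndbnd_setU _ _ _ (BSide b u)) ?bnd_simp //.
by rewrite measureU ?itv_bndbnd_setI0 //; exact: measurable_itv.
Qed.

Let r_diag a s : r a s s = 0.
Proof. by rewrite /r /J set_itvxx measure0. Qed.

Let e s t a := expR (- r a s t).

Let e01 s t : valued_in01 (e s t).
Proof. by move=> a; rewrite expR_ge0 expR_le1 oppr_le0 r_ge0. Qed.

Let e_ni s t : nonincreasing_fun (e s t).
Proof. by move=> a a' /(r_mono s t) aa'; rewrite ler_expR lerN2. Qed.

Let e_measurable s t : measurable_fun setT (e s t).
Proof. exact: nonincreasing_measurable (e_ni s t). Qed.

Let eM p u t a : p <= u -> u <= t -> e p t a = e p u a * e u t a.
Proof. by move=> pu ut; rewrite /e (r_add a pu ut) opprD expRD. Qed.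

Let G_Rintegral s t : 0 <= s -> s <= t -> G t s = \int[mu]_a e s t a.
Proof.
move=> s0; rewrite le_eqVlt => /predU1P[<-|st].
  rewrite G_diag //; under eq_Rintegral do rewrite /e r_diag oppr0 expR0.
  by rewrite Rintegral_cst // mul1r.
rewrite -[G t s]/(fine (G t s)%:E) G_offdiag //.
by congr fine; apply: eq_integral => a _; rewrite rhoE.
Qed.

Lemma cm_kernel_positive : positive_kernel G.
Proof.
move=> s t s0 st; rewrite G_Rintegral //; apply: Rintegral_gt0 => //.
  exact: valued_in01_integrable.
by move=> a; exact: expR_gt0.
Qed.

Lemma cm_kernel_ratio_nonincreasing : ratio_nonincreasing_kernel G.
Proof.
move=> p u s t p0 pu us st.
have u0 := le_trans p0 pu; have ps := le_trans pu us; have ut := le_trans us st.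
rewrite !G_Rintegral ?(le_trans u0 us) ?(le_trans ps st) //.
rewrite [X in X * _ <= _](@eq_Rintegral _ _ _ mu setT (fun a => e u s a * e s t a));
  last by move=> a _; exact: eM.
rewrite [X in _ * X <= _](@eq_Rintegral _ _ _ mu setT (fun a => e p u a * e u s a));
  last by move=> a _; exact: eM.
rewrite [X in _ <= X * _](@eq_Rintegral _ _ _ mu setT
    (fun a => e p u a * e u s a * e s t a)).
  exact: Rintegral_chebyshev.
by move=> a _; rewrite (eM a pu ut) (eM a us st) mulrA.
Qed.

End CompletelyMonotoneKernel.

Theorem mainTheorem4 (R : realType) (mu : {measure set R -> \bar R})
  (rho : R -> {measure set R -> \bar R}) (G : R -> R -> R) :
  finite_on_compacts mu ->
  (forall a, finite_on_compacts (rho a)) ->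
  (forall a, supported_on_Rplus (rho a)) ->
  (forall a b : R, a <= b -> measure_le_diff (rho a) (rho b)) ->
  (0 < mu setT)%E -> (mu setT < +oo)%E ->
  cm_double_kernel_formula G mu rho ->
  (forall t : R, 0 <= t -> G t t = fine (mu setT)) ->
  preserves_nonnegativity G.
Proof.
move=> _ rho_fin _ rho_mono mu_gt0 mu_fin G_formula G_diag.
have [b G_offdiag] : exists b, forall s t, 0 <= s -> s < t ->
    ((G t s)%:E = \int[mu]_(a in setT)
                    expeR (- rho a [set` Interval (BSide b s) (BSide b t)]))%E.
  by case: G_formula => G_offdiag; [exists false | exists true].
apply: ratio_nonincreasing_preserves_nonnegativity.
- exact: cm_kernel_positive rho_fin rho_mono mu_gt0 mu_fin G_offdiag G_diag.
- exact: cm_kernel_ratio_nonincreasing rho_fin rho_mono mu_fin G_offdiag G_diag.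
Qed.
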